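(* Let $\lambda=\lambda^x\otimes\mu\in\Pi(\mu,\nu,\gamma)$ with $\lambda^x\in\Pi(\nu^x,\gamma^x)$ for $\mu$-a.e. $x$, where $\pi_{XY}\#\lambda=\nu^x\otimes\mu$ and $\pi_{XZ}\#\lambda=\gamma^x\otimes\mu$. If $\lambda^x$ is an extreme point of $\Pi(\nu^x,\gamma^x)$ for $\mu$-a.e. $x\in X$, then $\lambda$ is an extreme point of $\Pi(\lambda^{XY},\gamma)\cap\Pi(\lambda^{XZ},\nu)$.
   Context: $X,Y,Z$ are complete separable metric spaces with Borel probability measures $\mu,\nu,\gamma$; $\Pi(\mu,\nu,\gamma)$ is the set of Borel probability measures on $X\times Y\times Z$ with those marginals, and $\Pi(\sigma,\eta)$ the set of probability measures on a product with marginals $\sigma,\eta$. $\pi_{XY},\pi_{XZ}$ are projections; $\lambda^{XY}=\pi_{XY}\#\lambda$, $\lambda^{XZ}=\pi_{XZ}\#\lambda$. $\Pi(\lambda^{XY},\gamma)=\{\rho\in\Pi(\mu,\nu,\gamma):\pi_{XY}\#\rho=\lambda^{XY}\}$ and $\Pi(\lambda^{XZ},\nu)=\{\rho\in\Pi(\mu,\nu,\gamma):\pi_{XZ}\#\rho=\lambda^{XZ}\}$. For a measure $\sigma$ on $A$ and a measurable family $(\eta^a)$ of probability measures on $B$, $\eta^a\otimes\sigma$ is the measure with $(\eta^a\otimes\sigma)(E\times F)=\int_E\eta^a(F)d\sigma(a)$ (disintegration, unique up to $\sigma$-null sets). *)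

From HB Require Import structures.
From mathcomp Require Import all_boot all_order all_algebra.
From mathcomp Require Import all_classical all_reals all_analysis measurable_realfun.

Set Implicit Arguments.
Unset Strict Implicit.
Unset Printing Implicit Defensive.

Import Order.TTheory GRing.Theory Num.Theory.

Local Open Scope classical_set_scope.
Local Open Scope ring_scope.

Definition separable_space (T : topologicalType) : Prop :=
  exists D : set T, countable D /\ closure D = setT.

Definition borel (T : ptopologicalType) := g_sigma_algebraType (@open T).

Section couplings.
Context {R : realType}.

Definition p1 {X Y Z : Type} (p : X * Y * Z) : X := p.1.1.
Definition p2 {X Y Z : Type} (p : X * Y * Z) : Y := p.1.2.
Definition p3 {X Y Z : Type} (p : X * Y * Z) : Z := p.2.
Definition pXY {X Y Z : Type} (p : X * Y * Z) : X * Y := p.1.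
Definition pXZ {X Y Z : Type} (p : X * Y * Z) : X * Z := (p.1.1, p.2).
Definition pX_YZ {X Y Z : Type} (p : X * Y * Z) : X * (Y * Z) :=
  (p.1.1, (p.1.2, p.2)).

Definition same_pushforward {dT dU} {T : measurableType dT}
  {U : measurableType dU} (f : T -> U) (rho lam : set T -> \bar R) : Prop :=
  forall A : set U, measurable A -> rho (f @^-1` A) = lam (f @^-1` A).

Definition Pi2 {dY dZ} {Y : measurableType dY} {Z : measurableType dZ}
  (s : probability Y R) (e : probability Z R) : set (probability (Y * Z)%type R) :=
  [set rho | (forall B : set Y, measurable B -> rho (fst @^-1` B) = s B) /\
             (forall C : set Z, measurable C -> rho (snd @^-1` C) = e C)].

Definition Pi3 {dX dY dZ} {X : measurableType dX} {Y : measurableType dY}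
  {Z : measurableType dZ} (mu : probability X R) (nu : probability Y R)
  (gam : probability Z R) : set (probability (X * Y * Z)%type R) :=
  [set rho | (forall A : set X, measurable A -> rho (p1 @^-1` A) = mu A) /\
             (forall B : set Y, measurable B -> rho (p2 @^-1` B) = nu B) /\
             (forall C : set Z, measurable C -> rho (p3 @^-1` C) = gam C)].

(* Pi(lam^{XY}, gam) = { rho in Pi(mu,nu,gam) | pi_XY # rho = pi_XY # lam } *)
Definition PiXY {dX dY dZ} {X : measurableType dX} {Y : measurableType dY}
  {Z : measurableType dZ} (mu : probability X R) (nu : probability Y R)
  (gam : probability Z R) (lam : probability (X * Y * Z)%type R) :
  set (probability (X * Y * Z)%type R) :=
  [set rho | Pi3 mu nu gam rho /\ same_pushforward pXY rho lam].

(* Pi(lam^{XZ}, nu) = { rho in Pi(mu,nu,gam) | pi_XZ # rho = pi_XZ # lam } *)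
Definition PiXZ {dX dY dZ} {X : measurableType dX} {Y : measurableType dY}
  {Z : measurableType dZ} (mu : probability X R) (nu : probability Y R)
  (gam : probability Z R) (lam : probability (X * Y * Z)%type R) :
  set (probability (X * Y * Z)%type R) :=
  [set rho | Pi3 mu nu gam rho /\ same_pushforward pXZ rho lam].

(* m = eta^a (x) sig : eta is a measurable family of probability measures on B
   indexed by A, and m(E x F) = \int_E eta^a(F) d sig(a) for measurable E, F. *)
Definition is_disintegration {dA dB} {A : measurableType dA}
  {B : measurableType dB} (sig : probability A R) (eta : A -> probability B R)
  (m : set (A * B) -> \bar R) : Prop :=
  (forall F : set B, measurable F -> measurable_fun setT (fun a => eta a F)) /\
  (forall (E : set A) (F : set B), measurable E -> measurable F ->
     m (E `*` F) = (\int[sig]_(a in E) eta a F)%E).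

(* Extreme point of a set C of probability measures: P is in C and is not a
   proper convex combination of two distinct elements of C (measures being
   identified when they agree on all measurable sets). *)
Definition extreme_point {dT} {T : measurableType dT}
  (C : set (probability T R)) (P : probability T R) : Prop :=
  C P /\
  forall (P1 P2 : probability T R) (t : R), C P1 -> C P2 -> 0 < t < 1 ->
    (forall A : set T, measurable A ->
       P A = (t%:E * P1 A + (1 - t)%:E * P2 A)%E) ->
    forall A : set T, measurable A -> P1 A = P2 A.

End couplings.

From HB Require Import structures.
From mathcomp Require Import all_boot all_order all_algebra.
From mathcomp Require Import all_classical all_reals all_analysis measurable_realfun.
From mathcomp Require Import ring lra.

Set Implicit Arguments.
Unset Strict Implicit.
Unset Printing Implicit Defensive.
Import Order.TTheory GRing.Theory Num.Theory.
Local Open Scope classical_set_scope.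
Local Open Scope ring_scope.

(* Write lam = t P1 + (1 - t) P2 with P1, P2 in the constraint set.  Both
   components are dominated by a multiple of lam, so they have densities f1, f2
   w.r.t. lam with t f1 + (1 - t) f2 = 1, and disintegrating along X writes
   P_i as the family of fibre measures f_i(x, .) lam^x integrated against mu.
   Since P_i has the same XY- and XZ-marginals as lam, for mu-almost every x the
   fibre measures f_i(x, .) lam^x are couplings of nu^x and gam^x: it suffices
   to test countably many sets, namely cylinders over finite intersections of
   countable generators of the Borel sets of Y and Z, which exist by
   separability.  Then lam^x = t f1(x, .) lam^x + (1 - t) f2(x, .) lam^x is a
   convex combination inside Pi(nu^x, gam^x), so extremality of lam^x forces
   f1(x, .) lam^x = lam^x; integrating in x gives P1 = lam, and likewise
   P2 = lam. *)

(** * Countable generators *)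

(* The generators are the interiors of the balls of radius [2/(m+1)] around
   the points of a countable dense set. *)
Lemma separable_countably_generated (R : realType)
    (T : completePseudoMetricType R) :
  separable_space T -> exists g : nat -> set (borel T),
    (forall n, measurable (g n)) /\ @measurable _ (borel T) `<=` <<s range g >>.
Proof.
move=> [D [cD clD]].
have [e De] : exists e : nat -> T, D `<=` range e.
  have /pcard_surjP [e se] := cD.
  by exists e => x Dx; have [n _ <-] := se x Dx; exists n.
pose g (n : nat) : set T := if @unpickle (nat * nat)%type n is Some im
  then (ball (e im.1) (2 * (im.2.+1%:R)^-1))° else set0.
have gE i m : g (pickle (i, m)) = (ball (e i) (2 * (m.+1%:R)^-1))°.
  by rewrite /g pickleK.
have og n : open (g n).
  by rewrite /g; case: unpickle => [im|]; [exact: open_interior | exact: open0].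
exists g; split; first by move=> n; apply: sub_sigma_algebra; exact: og.
apply: smallest_sub; first exact: smallest_sigma_algebra.
move=> U oU.
pose h n := if pselect (g n `<=` U) then g n else set0.
have -> : U = \bigcup_n h n.
  apply/seteqP; split; last first.
    by move=> x [n _]; rewrite /h; case: pselect => // gU /gU.
  move=> x Ux.
  have /nbhs_ballP [eps /= eps0 bU] : nbhs x U by exact: open_nbhs_nbhs.
  have [m _ /(_ m (leqnn m)) /= hm] :=
    near_infty_natSinv_lt (PosNum (divr_gt0 eps0 (ltr0n R 3))).
  set q := (m.+1%:R)^-1 : R in hm.
  have q0 : 0 < q by rewrite invr_gt0 ltr0n.
  have : closure D x by rewrite clD.
  move=> /(_ (ball x q) (nbhsx_ballx _ _ q0)) [d [/De [i _ eid] xd]].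
  exists (pickle (i, m)) => //.
  have xg : g (pickle (i, m)) x.
    rewrite gE eid /interior; apply/nbhs_ballP; exists q => //= y xy.
    rewrite -(_ : q + q = 2 * q); last by rewrite mulr2n mulrDl mul1r.
    by apply: ball_triangle xy; apply: ball_sym.
  rewrite /h; case: pselect => // -[]; rewrite gE eid => y /interior_subset dy.
  apply: bU; have : ball x (q + 2 * q) y by exact: ball_triangle dy.
  by apply: le_ball; move: hm; rewrite ltr_pdivlMr ?ltr0n // => hm; lra.
apply: (@sigma_algebra_bigcup _ setT (range g) h) => n; rewrite /h.
case: pselect => gU; last exact: sigma_algebra0.
by apply: sub_sigma_algebra; exists n.
Qed.

Local Open Scope ereal_scope.

Lemma ae_forall_countable (R : realType) d (T : measurableType d)
  (mu : {measure set T -> \bar R}) (I : countType) (P : I -> T -> Prop) :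
  (forall i, {ae mu, forall x, P i x}) -> {ae mu, forall x, forall i, P i x}.
Proof.
move=> aeP.
pose F n := if @unpickle I n is Some i then ~` [set x | P i x] else set0.
have : mu.-negligible (\bigcup_n F n).
  apply: negligible_bigcup => n; rewrite /F.
  by case: unpickle => [i|]; [exact: aeP | exact: negligible_set0].
apply: negligibleS => x /= /existsNP [i Pi].
by exists (pickle i) => //; rewrite /F pickleK.
Qed.

Lemma probability_setT_lty (R : realType) d (T : measurableType d)
  (P : probability T R) : P setT < +oo.
Proof. by rewrite probability_setT ltey. Qed.

Lemma probability_fin_num (R : realType) d (T : measurableType d)
  (P : probability T R) A : measurable A -> P A \is a fin_num.
Proof.
move=> mA; rewrite ge0_fin_numE // (le_lt_trans _ (probability_setT_lty P)) //.
by rewrite le_measure // inE.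
Qed.

Lemma measure_unique_setX (R : realType) d1 d2 (T1 : measurableType d1)
  (T2 : measurableType d2) (m1 m2 : {measure set (T1 * T2) -> \bar R}) :
  m1 setT < +oo ->
  (forall A B, measurable A -> measurable B -> m1 (A `*` B) = m2 (A `*` B)) ->
  forall C, measurable C -> m1 C = m2 C.
Proof.
move=> m1T m12 C mC.
apply: (measure_unique [set A `*` B | A in measurable & B in measurable]
  (fun _ => setT)) => //.
- exact: measurable_prod_measurableType.
- move=> _ _ [A1 mA1 [B1 mB1 <-]] [A2 mA2 [B2 mB2 <-]].
  rewrite -setXI; exists (A1 `&` A2); first exact: measurableI.
  by exists (B1 `&` B2) => //; exact: measurableI.
- by move=> _; exists setT => //; exists setT => //; rewrite setXTT.
- by rewrite bigcup_const.
- by move=> _ [A mA [B mB <-]]; exact: m12.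
Qed.

Section finite_meets.
Context d (T : measurableType d) (g : nat -> set T).
Hypothesis mg : forall n, measurable (g n).

Definition finite_meet (s : seq nat) : set T := \big[setI/setT]_(i <- s) g i.

Lemma measurable_finite_meet s : measurable (finite_meet s).
Proof. by rewrite /finite_meet; elim/big_ind : _ => //; exact: measurableI. Qed.

Lemma finite_meet_nil : finite_meet [::] = setT.
Proof. by rewrite /finite_meet big_nil. Qed.

Lemma measure_unique_finite_meet (R : realType)
    (m1 m2 : {measure set T -> \bar R}) :
  measurable `<=` <<s range g >> -> m1 setT < +oo ->
  (forall s, m1 (finite_meet s) = m2 (finite_meet s)) ->
  forall B, measurable B -> m1 B = m2 B.
Proof.
move=> gen m1T m12 B mB.
apply: (g_sigma_algebra_measure_unique (range finite_meet) _ (fun _ => setT)).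
- by move=> _ [s _ <-]; exact: measurable_finite_meet.
- by move=> n; exists [::] => //; rewrite finite_meet_nil.
- by rewrite bigcup_const.
- move=> _ _ [s1 _ <-] [s2 _ <-]; exists (s1 ++ s2) => //.
  by rewrite /finite_meet big_cat.
- by move=> _ [s _ <-]; exact: m12.
- by [].
- apply: (sub_sigma_algebra2 (M := range g)); last exact: gen.
  by move=> _ [n _ <-]; exists [:: n] => //; rewrite /finite_meet big_seq1.
Qed.

End finite_meets.

(** * Densities *)

Section density.
Context (R : realType) d (T : measurableType d).
Variables (m : {measure set T -> \bar R}) (f : T -> \bar R).
Hypotheses (f0 : forall x, 0 <= f x) (mf : measurable_fun setT f).

Definition density (A : set T) := \int[m]_(x in A) f x.

Let density0 : density set0 = 0. Proof. exact: integral_set0. Qed.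
Let density_ge0 A : 0 <= density A. Proof. exact: integral_ge0. Qed.
Let density_sigma_additive : semi_sigma_additive density.
Proof.
move=> F mF tF mUF; rewrite /density ge0_integral_bigcup //.
- by apply: is_cvg_nneseries => n _ _; exact: integral_ge0.
- exact: measurable_funTS.
Qed.

HB.instance Definition _ := isMeasure.Build _ _ _ density density0 density_ge0
  density_sigma_additive.

Definition mdensity : {measure set T -> \bar R} := density.

End density.

Section densities.
Context (R : realType) d (T : measurableType d).

Definition is_density (m : {measure set T -> \bar R}) (f : T -> \bar R)
    (Q : set T -> \bar R) :=
  [/\ forall p, 0 <= f p, measurable_fun setT f &
      forall A, measurable A -> Q A = \int[m]_(p in A) f p].

Lemma density_of_scaled_le (L Q : probability T R) (c : R) :
  (0 < c)%R -> (forall A, measurable A -> c%:E * Q A <= L A) ->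
  exists f, is_density L f Q.
Proof.
move=> c0 cQL.
have QL : Q `<< L.
  apply/null_content_dominatesP => A mA LA0; apply/eqP.
  by rewrite eq_le measure_ge0 andbT; move: (cQL A mA); rewrite LA0 pmule_rle0.
have [f [f0 _ fint fE]] := radon_nikodym_sigma_finite QL.
by exists f; split => //; exact: measurable_int fint.
Qed.

Lemma measurable_fun_patch_cst (N : set T) (f : T -> \bar R) (c : \bar R) :
  measurable N -> measurable_fun setT f ->
  measurable_fun setT (fun p => if p \in N then c else f p).
Proof.
move=> mN mf.
rewrite (_ : (fun p => _) = fun p => (cst c \_ N) p + (f \_ (~` N)) p).
  apply: emeasurable_funD.
  - exact: ((measurable_restrictT (cst c) mN).1 (measurable_cst _)).
  - exact: ((measurable_restrictT f (measurableC mN)).1 (measurable_funTS mf)).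
apply/funext => p; rewrite /patch in_setC.
by case: (boolP (p \in N)) => _ /=; rewrite ?adde0 ?add0e.
Qed.

Lemma is_density_patch (m : {measure set T -> \bar R}) f Q (N : set T) c :
  0 <= c -> measurable N -> m N = 0 -> is_density m f Q ->
  is_density m (fun p => if p \in N then c else f p) Q.
Proof.
move=> c0 mN mN0 [f0 mf fQ]; split.
- by move=> p; case: ifP.
- exact: measurable_fun_patch_cst.
move=> A mA; rewrite fQ //; apply: ae_eq_integral => //.
- exact: measurable_funTS.
- exact/measurable_funTS/measurable_fun_patch_cst.
- exists N; split => // p /= fp; apply: contrapT => Np; apply: fp => _.
  by case: ifPn => // /set_mem.
Qed.

Lemma integral_convex_combination (m : {measure set T -> \bar R}) (t : R)
    (f1 f2 : T -> \bar R) A :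
  (0 <= t <= 1)%R -> measurable A ->
  (forall p, 0 <= f1 p) -> measurable_fun setT f1 ->
  (forall p, 0 <= f2 p) -> measurable_fun setT f2 ->
  \int[m]_(p in A) (t%:E * f1 p + (1 - t)%:E * f2 p) =
  t%:E * \int[m]_(p in A) f1 p + (1 - t)%:E * \int[m]_(p in A) f2 p.
Proof.
move=> /andP[t0 t1] mA f10 mf1 f20 mf2.
have t'0 : (0 <= 1 - t)%R by rewrite subr_ge0.
rewrite ge0_integralD //; last 4 first.
- by move=> p _; apply: mule_ge0.
- by apply: measurable_funeM; exact: measurable_funTS.
- by move=> p _; apply: mule_ge0.
- by apply: measurable_funeM; exact: measurable_funTS.
by rewrite !ge0_integralZl_EFin //; exact: measurable_funTS.
Qed.

Lemma convex_decomposition_densities (L Q1 Q2 : probability T R) (t : R) :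
  (0 < t < 1)%R ->
  (forall A, measurable A -> L A = t%:E * Q1 A + (1 - t)%:E * Q2 A) ->
  exists f1 f2, [/\ is_density L f1 Q1, is_density L f2 Q2 &
    forall p, t%:E * f1 p + (1 - t)%:E * f2 p = 1].
Proof.
move=> /andP[t0 t1] LQ.
have t'0 : (0 < 1 - t)%R by rewrite subr_gt0.
have tle : (0 <= t <= 1)%R by rewrite ltW // ltW.
have [f1 [f10 mf1 f1Q]] : exists f1, is_density L f1 Q1.
  apply: (density_of_scaled_le t0) => A mA.
  by rewrite LQ // leeDl // mule_ge0 // lee_fin ltW.
have [f2 [f20 mf2 f2Q]] : exists f2, is_density L f2 Q2.
  apply: (density_of_scaled_le t'0) => A mA.
  by rewrite LQ // leeDr // mule_ge0 // lee_fin ltW.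
pose g p := t%:E * f1 p + (1 - t)%:E * f2 p.
have : ae_eq L setT (EFin \o cst 1%R) g.
  apply: integral_ae_eq => //.
  - exact: finite_measure_integrable_cst.
  - by apply: emeasurable_funD; apply: measurable_funeM.
  - move=> A _ mA.
    rewrite integral_convex_combination // -f1Q // -f2Q // -LQ //.
    by rewrite (eq_integral (cst 1)) // integral_cst // mul1e.
(* The identity holds off an [L]-null set [N]; redefine both densities as [1]
   on [N]. *)
move=> [N [mN LN0 gN]].
have g1 p : ~ N p -> g p = 1.
  by move=> Np; apply: contrapT => gp; apply/Np/gN => h; apply/gp/esym/h.
exists (fun p => if p \in N then 1 else f1 p),
  (fun p => if p \in N then 1 else f2 p).
split; [exact: is_density_patch | exact: is_density_patch |].
move=> p; case: ifPn => pN; first by rewrite !mule1 -EFinD addrC subrK.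
by apply: g1 => Np; rewrite (mem_set Np) in pN.
Qed.

Lemma mnormalize_id (m : {measure set T -> \bar R}) (P : probability T R) A :
  m setT = 1 -> mnormalize m P A = m A.
Proof. by move=> m1; rewrite /mnormalize m1 gt_eqF ?lte01 //= invr1 mule1. Qed.

Lemma density_probability (P : probability T R) (f : T -> \bar R) :
  (forall p, 0 <= f p) -> measurable_fun setT f ->
  \int[P]_(p in setT) f p = 1 ->
  exists P' : probability T R, forall A, P' A = \int[P]_(p in A) f p.
Proof.
move=> f0 mf f1; exists (mnormalize (mdensity P f0 mf) P) => A.
exact: mnormalize_id.
Qed.

End densities.

(** * Disintegrations *)

Section semidirect_measure.
Context (R : realType) dX dW (X : measurableType dX) (W : measurableType dW).
Variables (mu : probability X R) (k : X -> probability W R).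
Hypothesis mk : forall S, measurable S -> measurable_fun setT (fun x => k x S).

Definition kernel_of_family : X -> {measure set W -> \bar R} := fun x => k x.
HB.instance Definition _ := isKernel.Build _ _ X W R kernel_of_family mk.
Let kernel_of_family1 x : kernel_of_family x setT = 1.
Proof. exact: probability_setT. Qed.
HB.instance Definition _ :=
  Kernel_isProbability.Build _ _ X W R kernel_of_family kernel_of_family1.

Lemma measurable_fun_fibre_integral (h : X * W -> \bar R) :
  (forall z, 0 <= h z) -> measurable_fun setT h ->
  measurable_fun setT (fun x => \int[k x]_w h (x, w)).
Proof.
move=> h0 mh.
exact: (measurable_fun_integral_finite_kernel h kernel_of_family).
Qed.

(* Viewing [mu] as a kernel from the one-point space, the kernel composition
   [kcomp] provides the measure [A |-> \int k x (xsection A x) d mu] together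
   with its integration formula [integral_kcomp]. *)
Definition const_kernel : unit -> {measure set X -> \bar R} := fun _ => mu.
Let measurable_const_kernel S :
  measurable S -> measurable_fun setT (fun u => const_kernel u S).
Proof. by move=> _; exact: measurable_cst. Qed.
HB.instance Definition _ := isKernel.Build _ _ unit X R const_kernel
  measurable_const_kernel.
Let const_kernel1 u : const_kernel u setT = 1.
Proof. exact: probability_setT. Qed.
HB.instance Definition _ :=
  Kernel_isProbability.Build _ _ unit X R const_kernel const_kernel1.

Definition pair_mfun (x : X) : {mfun W >-> (X * W)%type} :=
  HB.pack (pair x)
    (isMeasurableFun.Build _ _ _ _ (pair x) (pair1_measurable x)).

Definition graph_kernel :
    (unit * X)%type -> {measure set (X * W)%type -> \bar R} :=
  fun p => distribution (k p.2) (pair_mfun p.2).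

Let graph_kernelE p A : graph_kernel p A = k p.2 (xsection A p.2).
Proof.
rewrite /graph_kernel /distribution /pushforward /=; congr (k _ _).
by apply/seteqP; split => w /=; rewrite /xsection /= inE.
Qed.

Let measurable_graph_kernel A :
  measurable A -> measurable_fun setT (fun p => graph_kernel p A).
Proof.
move=> mA; rewrite (_ : (fun p => _) =
    (fun x => kernel_of_family x (xsection A x)) \o snd).
  apply: measurableT_comp => //.
  by apply: measurable_fun_xsection_finite_kernel; rewrite inE.
by apply/funext => p; rewrite graph_kernelE.
Qed.
HB.instance Definition _ := isKernel.Build _ _ _ _ R graph_kernel
  measurable_graph_kernel.
Let graph_kernel1 p : graph_kernel p setT = 1.
Proof. exact: probability_setT. Qed.
HB.instance Definition _ :=
  Kernel_isProbability.Build _ _ _ _ R graph_kernel graph_kernel1.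

Definition semidirect_measure := kcomp const_kernel graph_kernel tt.

Lemma semidirect_measureE A :
  semidirect_measure A = \int[mu]_x k x (xsection A x).
Proof.
by apply: eq_integral => x _; rewrite graph_kernelE.
Qed.

Lemma integral_semidirect_measure h : (forall z, 0 <= h z) ->
  measurable_fun setT h ->
  \int[semidirect_measure]_z h z = \int[mu]_x \int[k x]_w h (x, w).
Proof.
move=> h0 mh; rewrite integral_kcomp //=; apply: eq_integral => x _.
by rewrite ge0_integral_pushforward.
Qed.

End semidirect_measure.

Section disintegration.
Context (R : realType) dX dW (X : measurableType dX) (W : measurableType dW).
Variables (mu : probability X R) (k : X -> probability W R).
Hypothesis mk : forall S, measurable S -> measurable_fun setT (fun x => k x S).
Variable L : probability (X * W)%type R.
Hypothesis L_rect : forall E S, measurable E -> measurable S ->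
  L (E `*` S) = \int[mu]_(x in E) k x S.

Lemma disintegration_semidirect A :
  measurable A -> L A = semidirect_measure mu k A.
Proof.
apply: measure_unique_setX; first exact: probability_setT_lty.
move=> E S mE mS; transitivity (\int[mu]_(x in E) k x S); first exact: L_rect.
symmetry; etransitivity; first exact: semidirect_measureE.
rewrite [RHS]integral_mkcond; apply: eq_integral => x _; rewrite /patch.
case: ifPn => xE; first by rewrite in_xsectionX.
by rewrite notin_xsectionX // measure0.
Qed.

Lemma integral_disintegration h : (forall z, 0 <= h z) ->
  measurable_fun setT h ->
  \int[L]_z h z = \int[mu]_x \int[k x]_w h (x, w).
Proof.
move=> h0 mh; rewrite -integral_semidirect_measure //.
by apply: eq_measure_integral => A mA _; exact: disintegration_semidirect.
Qed.

Lemma integrable_fibre_measure S :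
  measurable S -> mu.-integrable setT (fun x => k x S).
Proof.
move=> mS; apply/integrableP; split; first exact: mk.
under eq_integral => x _ do rewrite gee0_abs //.
rewrite -L_rect // -ge0_fin_numE // probability_fin_num //.
exact: measurableX.
Qed.

End disintegration.

Section fibre_density.
Context (R : realType) dX dW (X : measurableType dX) (W : measurableType dW).
Variables (mu : probability X R) (k : X -> probability W R).
Hypothesis mk : forall S, measurable S -> measurable_fun setT (fun x => k x S).
Variable L : probability (X * W)%type R.
Hypothesis L_rect : forall E S, measurable E -> measurable S ->
  L (E `*` S) = \int[mu]_(x in E) k x S.
Variables (f : X * W -> \bar R) (Q : probability (X * W)%type R).
Hypothesis fQ : is_density L f Q.

Definition fibre_density x (S : set W) := \int[k x]_(w in S) f (x, w).

Lemma measurable_fibre_density S :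
  measurable S -> measurable_fun setT (fun x => fibre_density x S).
Proof.
case: fQ => f0 mf _ mS.
have mfS := (measurable_restrictT f (measurableX measurableT mS)).1
  (measurable_funTS mf).
rewrite (_ : (fun x => _) = fun x => \int[k x]_w (f \_ (setT `*` S)) (x, w)).
  by apply: measurable_fun_fibre_integral => // z; exact: erestrict_ge0.
apply/funext => x; rewrite /fibre_density integral_mkcond.
by apply: eq_integral => w _; rewrite /patch in_setX /= in_setT.
Qed.

Lemma fibre_density_setX E S : measurable E -> measurable S ->
  Q (E `*` S) = \int[mu]_(x in E) fibre_density x S.
Proof.
case: fQ => f0 mf fQ' mE mS.
have mfES := (measurable_restrictT f (measurableX mE mS)).1
  (measurable_funTS mf).
rewrite fQ'; last exact: measurableX.
rewrite integral_mkcond (integral_disintegration mk L_rect) //; last first.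
  by move=> z; exact: erestrict_ge0.
rewrite [RHS]integral_mkcond.
apply: eq_integral => x _.
have [xE|xE] := boolP (x \in E); rewrite patchE ?(negbTE xE) ?xE.
  rewrite /fibre_density [RHS]integral_mkcond; apply: eq_integral => w _.
  by rewrite /patch in_setX /= xE.
by apply: integral0_eq => w _; rewrite /patch in_setX /= (negbTE xE).
Qed.

Lemma ae_fibre_density_eq S : measurable S ->
  (forall E, measurable E -> Q (E `*` S) = L (E `*` S)) ->
  {ae mu, forall x, fibre_density x S = k x S}.
Proof.
move=> mS QL.
have : ae_eq mu setT (fun x => k x S) (fun x => fibre_density x S).
  apply: integral_ae_eq => //.
  - exact: (integrable_fibre_measure mk L_rect).
  - exact: measurable_fibre_density.
  - by move=> E _ mE; rewrite -L_rect // -QL // fibre_density_setX.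
by apply: filterS => x /(_ I).
Qed.

End fibre_density.

(** * Extremality along the fibres *)

Lemma extreme_point_component_eq (R : realType) d (T : measurableType d)
    (C : set (probability T R)) (P P1 P2 : probability T R) (t : R) :
  extreme_point C P -> C P1 -> C P2 -> (0 < t < 1)%R ->
  (forall A, measurable A -> P A = t%:E * P1 A + (1 - t)%:E * P2 A) ->
  forall A, measurable A -> P1 A = P A.
Proof.
move=> [_ Pext] CP1 CP2 t01 PP A mA.
rewrite PP // -(Pext _ _ _ CP1 CP2 t01 PP A mA).
rewrite -(fineK (probability_fin_num P1 mA)) -!EFinM -EFinD.
by congr EFin; ring.
Qed.

Lemma preimage_measure_unique_finite_meet (R : realType) d d'
    (T : measurableType d) (U : measurableType d') (phi : {mfun T >-> U})
    (g : nat -> set U) (P : probability T R) (m : probability U R) :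
  (forall n, measurable (g n)) -> measurable `<=` <<s range g >> ->
  (forall s, P (phi @^-1` finite_meet g s) = m (finite_meet g s)) ->
  forall B, measurable B -> P (phi @^-1` B) = m B.
Proof.
move=> mg gen Pm B mB; change (distribution P phi B = m B).
apply: (measure_unique_finite_meet mg) => //; exact: probability_setT_lty.
Qed.

Section couplings_on_generators.
Context (R : realType) dY dZ (Y : measurableType dY) (Z : measurableType dZ).
Variables (gY : nat -> set Y) (gZ : nat -> set Z).
Hypotheses (mgY : forall n, measurable (gY n))
  (genY : measurable `<=` <<s range gY >>).
Hypotheses (mgZ : forall n, measurable (gZ n))
  (genZ : measurable `<=` <<s range gZ >>).

(* Countably many conditions, so that they can be checked for almost every
   fibre at once; by [Pi2_agree_on_marginal_meets] they determine marginals. *)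
Definition agree_on_marginal_meets (m1 m2 : set (Y * Z) -> \bar R) :=
  (forall s, m1 (fst @^-1` finite_meet gY s) =
             m2 (fst @^-1` finite_meet gY s)) /\
  (forall s, m1 (snd @^-1` finite_meet gZ s) =
             m2 (snd @^-1` finite_meet gZ s)).

Let fst_mfun : {mfun (Y * Z)%type >-> Y} :=
  HB.pack (@fst Y Z) (isMeasurableFun.Build _ _ _ _ (@fst Y Z) measurable_fst).
Let snd_mfun : {mfun (Y * Z)%type >-> Z} :=
  HB.pack (@snd Y Z) (isMeasurableFun.Build _ _ _ _ (@snd Y Z) measurable_snd).

Lemma Pi2_agree_on_marginal_meets (nu : probability Y R) (gam : probability Z R)
    (P K : probability (Y * Z)%type R) :
  Pi2 nu gam K -> agree_on_marginal_meets P K -> Pi2 nu gam P.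
Proof.
move=> [KY KZ] [PKY PKZ]; split.
- apply: (preimage_measure_unique_finite_meet (phi := fst_mfun) mgY genY) => s.
  by rewrite PKY KY //; exact: measurable_finite_meet.
- apply: (preimage_measure_unique_finite_meet (phi := snd_mfun) mgZ genZ) => s.
  by rewrite PKZ KZ //; exact: measurable_finite_meet.
Qed.

Lemma extreme_coupling_density_eq (nu : probability Y R)
    (gam : probability Z R) (K : probability (Y * Z)%type R) (t : R)
    (f1 f2 : Y * Z -> \bar R) :
  (0 < t < 1)%R -> extreme_point (Pi2 nu gam) K ->
  (forall w, 0 <= f1 w) -> measurable_fun setT f1 ->
  (forall w, 0 <= f2 w) -> measurable_fun setT f2 ->
  (forall w, t%:E * f1 w + (1 - t)%:E * f2 w = 1) ->
  agree_on_marginal_meets (fun S => \int[K]_(w in S) f1 w) K ->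
  agree_on_marginal_meets (fun S => \int[K]_(w in S) f2 w) K ->
  forall S, measurable S -> \int[K]_(w in S) f1 w = K S.
Proof.
move=> t01 Kext f10 mf1 f20 mf2 f12 agree1 agree2.
have mass1 f : agree_on_marginal_meets (fun S => \int[K]_(w in S) f w) K ->
    \int[K]_(w in setT) f w = 1.
  by case=> /(_ [::]); rewrite finite_meet_nil preimage_setT probability_setT.
have [P1 P1E] := density_probability f10 mf1 (mass1 _ agree1).
have [P2 P2E] := density_probability f20 mf2 (mass1 _ agree2).
have agreeP (P : probability _ R) f : (forall S, P S = \int[K]_(w in S) f w) ->
    agree_on_marginal_meets (fun S => \int[K]_(w in S) f w) K ->
    agree_on_marginal_meets P K.
  by move=> PE [aY aZ]; split => s; rewrite PE.
have KP S : measurable S -> K S = t%:E * P1 S + (1 - t)%:E * P2 S.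
  move=> mS; rewrite P1E P2E -integral_convex_combination //; last first.
    by case/andP: t01 => t0 t1; rewrite !ltW.
  under eq_integral do rewrite f12.
  by rewrite integral_cst // mul1e.
move=> S mS; rewrite -P1E.
apply: (extreme_point_component_eq Kext _ _ t01 KP) => //.
- exact: (Pi2_agree_on_marginal_meets Kext.1 (agreeP _ _ P1E agree1)).
- exact: (Pi2_agree_on_marginal_meets Kext.1 (agreeP _ _ P2E agree2)).
Qed.

End couplings_on_generators.

Section extreme_fibres.
Context (R : realType) dX dY dZ (X : measurableType dX) (Y : measurableType dY)
  (Z : measurableType dZ).
Local Notation W := (Y * Z)%type.
Variables (mu : probability X R) (k : X -> probability W R).
Hypothesis mk : forall S, measurable S -> measurable_fun setT (fun x => k x S).
Variable L : probability (X * W)%type R.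
Hypothesis L_rect : forall E S, measurable E -> measurable S ->
  L (E `*` S) = \int[mu]_(x in E) k x S.
Variables (gY : nat -> set Y) (gZ : nat -> set Z).
Hypotheses (mgY : forall n, measurable (gY n))
  (genY : measurable `<=` <<s range gY >>).
Hypotheses (mgZ : forall n, measurable (gZ n))
  (genZ : measurable `<=` <<s range gZ >>).

Definition same_marginal_rects (Q : set (X * W) -> \bar R) :=
  (forall E B, measurable E -> measurable B ->
     Q (E `*` (fst @^-1` B)) = L (E `*` (fst @^-1` B))) /\
  (forall E C, measurable E -> measurable C ->
     Q (E `*` (snd @^-1` C)) = L (E `*` (snd @^-1` C))).

Lemma ae_agree_fibre_density f (Q : probability (X * W)%type R) :
  is_density L f Q -> same_marginal_rects Q ->
  {ae mu, forall x, agree_on_marginal_meets gY gZ (fibre_density k f x) (k x)}.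
Proof.
move=> fQ [QY QZ].
have aeY : {ae mu, forall x, forall s, fibre_density k f x
    (fst @^-1` finite_meet gY s) = k x (fst @^-1` finite_meet gY s)}.
  apply: ae_forall_countable => s; rewrite -setXT.
  apply: (ae_fibre_density_eq mk L_rect fQ).
    exact: measurableX (measurable_finite_meet mgY _) measurableT.
  by move=> E mE; rewrite setXT QY //; exact: measurable_finite_meet.
have aeZ : {ae mu, forall x, forall s, fibre_density k f x
    (snd @^-1` finite_meet gZ s) = k x (snd @^-1` finite_meet gZ s)}.
  apply: ae_forall_countable => s; rewrite -setTX.
  apply: (ae_fibre_density_eq mk L_rect fQ).
    exact: measurableX measurableT (measurable_finite_meet mgZ _).
  by move=> E mE; rewrite setTX QZ //; exact: measurable_finite_meet.
by apply: filterS2 aeY aeZ => x.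
Qed.

Theorem component_eq_of_extreme_fibres (nx : X -> probability Y R)
    (gx : X -> probability Z R) (Q1 Q2 : probability (X * W)%type R) (t : R) :
  (0 < t < 1)%R ->
  (forall A, measurable A -> L A = t%:E * Q1 A + (1 - t)%:E * Q2 A) ->
  same_marginal_rects Q1 -> same_marginal_rects Q2 ->
  {ae mu, forall x, extreme_point (Pi2 (nx x) (gx x)) (k x)} ->
  forall A, measurable A -> Q1 A = L A.
Proof.
move=> t01 LQ Q1L Q2L kext.
have [f1 [f2 [f1Q f2Q f12]]] := convex_decomposition_densities t01 LQ.
have [f10 mf1 _] := f1Q; have [f20 mf2 _] := f2Q.
have fibre_eq : {ae mu, forall x, forall S, measurable S ->
    fibre_density k f1 x S = k x S}.
  apply: filterS3 kext (ae_agree_fibre_density f1Q Q1L)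
    (ae_agree_fibre_density f2Q Q2L) => x xext agree1 agree2.
  exact: (extreme_coupling_density_eq mgY genY mgZ genZ t01 xext
    (fun w => f10 (x, w)) (measurableT_comp mf1 (pair1_measurable x))
    (fun w => f20 (x, w)) (measurableT_comp mf2 (pair1_measurable x))
    (fun w => f12 (x, w)) agree1 agree2).
apply: measure_unique_setX; first exact: probability_setT_lty.
move=> E S mE mS.
transitivity (\int[mu]_(x in E) fibre_density k f1 x S).
  exact: (fibre_density_setX mk L_rect f1Q).
transitivity (\int[mu]_(x in E) k x S); last exact/esym/L_rect.
apply: ae_eq_integral => //.
- exact/measurable_funTS/(measurable_fibre_density mk f1Q).
- exact/measurable_funTS/mk.
- by apply: filterS fibre_eq => x /(_ S mS).
Qed.

End extreme_fibres.

Section reassociation.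
Context (R : realType) dX dY dZ (X : measurableType dX) (Y : measurableType dY)
  (Z : measurableType dZ).

Lemma measurable_pX_YZ : measurable_fun setT (@pX_YZ X Y Z).
Proof.
apply/measurable_fun_pairP; split => /=.
  exact: (measurableT_comp measurable_fst measurable_fst).
apply/measurable_fun_pairP; split => /=; last exact: measurable_snd.
exact: (measurableT_comp measurable_snd measurable_fst).
Qed.

Definition pXY_Z (q : X * (Y * Z)) : X * Y * Z := ((q.1, q.2.1), q.2.2).

Lemma measurable_pXY_Z : measurable_fun setT pXY_Z.
Proof.
apply/measurable_fun_pairP; split => /=; last first.
  exact: (measurableT_comp measurable_snd measurable_snd).
apply/measurable_fun_pairP; split => /=; first exact: measurable_fst.
exact: (measurableT_comp measurable_fst measurable_snd).
Qed.

Lemma pX_YZK (A : set (X * Y * Z)) : @pX_YZ X Y Z @^-1` (pXY_Z @^-1` A) = A.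
Proof. by apply/seteqP; split => -[[a b] c]. Qed.

Lemma pX_YZ_preimage_fst (E : set X) (B : set Y) :
  @pX_YZ X Y Z @^-1` (E `*` (fst @^-1` B)) = @pXY X Y Z @^-1` (E `*` B).
Proof. by apply/seteqP; split => -[[a b] c]. Qed.

Lemma pX_YZ_preimage_snd (E : set X) (C : set Z) :
  @pX_YZ X Y Z @^-1` (E `*` (snd @^-1` C)) = @pXZ X Y Z @^-1` (E `*` C).
Proof. by apply/seteqP; split => -[[a b] c]. Qed.

Let pX_YZ_mfun : {mfun (X * Y * Z)%type >-> (X * (Y * Z))%type} :=
  HB.pack (@pX_YZ X Y Z) (isMeasurableFun.Build _ _ _ _ _ measurable_pX_YZ).

Lemma component_eq_PiXY_PiXZ (mu : probability X R) (nu : probability Y R)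
    (gam : probability Z R) (lam : probability (X * Y * Z)%type R)
    (lamx : X -> probability (Y * Z)%type R) (nux : X -> probability Y R)
    (gamx : X -> probability Z R) (gY : nat -> set Y) (gZ : nat -> set Z)
    (P1 P2 : probability (X * Y * Z)%type R) (t : R) :
  (forall n, measurable (gY n)) -> measurable `<=` <<s range gY >> ->
  (forall n, measurable (gZ n)) -> measurable `<=` <<s range gZ >> ->
  is_disintegration mu lamx (fun S => lam (pX_YZ @^-1` S)) ->
  {ae mu, forall x, extreme_point (Pi2 (nux x) (gamx x)) (lamx x)} ->
  (PiXY mu nu gam lam `&` PiXZ mu nu gam lam) P1 ->
  (PiXY mu nu gam lam `&` PiXZ mu nu gam lam) P2 -> (0 < t < 1)%R ->
  (forall A, measurable A -> lam A = t%:E * P1 A + (1 - t)%:E * P2 A) ->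
  forall A, measurable A -> P1 A = lam A.
Proof.
move=> mgY genY mgZ genZ [mk lam_rect] lamx_ext [[_ P1XY] [_ P1XZ]]
  [[_ P2XY] [_ P2XZ]] t01 lamP A mA.
have mpre S : measurable S -> measurable (@pX_YZ X Y Z @^-1` S).
  by move=> mS; rewrite -[X in measurable X]setTI; exact: measurable_pX_YZ.
have marginals (P : probability _ R) : same_pushforward pXY P lam ->
    same_pushforward pXZ P lam ->
    same_marginal_rects (distribution lam pX_YZ_mfun)
      (distribution P pX_YZ_mfun).
  move=> PXY PXZ; split=> E B mE mB; rewrite /distribution /pushforward /=.
    by rewrite pX_YZ_preimage_fst PXY //; exact: measurableX.
  by rewrite pX_YZ_preimage_snd PXZ //; exact: measurableX.
rewrite -(pX_YZK A); pose F := pX_YZ_mfun.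
change (distribution P1 F (pXY_Z @^-1` A) = distribution lam F (pXY_Z @^-1` A)).
apply: (@component_eq_of_extreme_fibres R _ _ _ X Y Z mu lamx mk
  (distribution lam F) lam_rect gY gZ mgY genY mgZ genZ nux gamx
  (distribution P1 F) (distribution P2 F) t t01 _ (marginals _ P1XY P1XZ)
  (marginals _ P2XY P2XZ) lamx_ext).
- by move=> S mS; exact: lamP (mpre _ mS).
- rewrite -[X in measurable X]setTI; exact: measurable_pXY_Z.
Qed.

End reassociation.

Local Close Scope ereal_scope.
Unset Implicit Arguments.
Set Strict Implicit.

Theorem mainTheorem12 (R : realType)
  (X Y Z : completePseudoMetricType R)
  (hX : hausdorff_space X) (hY : hausdorff_space Y) (hZ : hausdorff_space Z)
  (sX : separable_space X) (sY : separable_space Y) (sZ : separable_space Z)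
  (mu : probability (borel X) R) (nu : probability (borel Y) R)
  (gam : probability (borel Z) R)
  (lam : probability (borel X * borel Y * borel Z)%type R)
  (lamx : borel X -> probability (borel Y * borel Z)%type R)
  (nux : borel X -> probability (borel Y) R)
  (gamx : borel X -> probability (borel Z) R) :
  Pi3 mu nu gam lam ->
  is_disintegration mu lamx (fun S => lam (pX_YZ @^-1` S)) ->
  is_disintegration mu nux (fun S => lam (pXY @^-1` S)) ->
  is_disintegration mu gamx (fun S => lam (pXZ @^-1` S)) ->
  {ae mu, forall x, Pi2 (nux x) (gamx x) (lamx x)} ->
  {ae mu, forall x, extreme_point (Pi2 (nux x) (gamx x)) (lamx x)} ->
  extreme_point (PiXY mu nu gam lam `&` PiXZ mu nu gam lam) lam.
Proof.
move=> lam_Pi3 lam_disint _ _ _ lamx_ext.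
have [gY [mgY genY]] := separable_countably_generated sY.
have [gZ [mgZ genZ]] := separable_countably_generated sZ.
have component_eq :=
  component_eq_PiXY_PiXZ mgY genY mgZ genZ lam_disint lamx_ext.
split; first by split; split.
move=> P1 P2 t P1_in P2_in t01 lamP A mA.
rewrite (component_eq _ _ _ _ _ P1_in P2_in t01 lamP A mA).
have /andP[t0 t1] := t01.
symmetry; apply: (component_eq _ _ _ _ (1 - t) P2_in P1_in) => //.
  by rewrite subr_gt0 t1 ltrBlDr ltrDl t0.
move=> B mB; rewrite lamP // addeC; congr (_ + _)%E.
by rewrite opprB addrC subrK.
Qed.
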